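(* For every $c\geq1$, $$|UD_2((1,2,c))|=3\cdot2^{c+1}-2F_{c+4}-2(c)_2,$$ where $F_k$ is the $k$-th Fibonacci number ($F_0=0$, $F_1=1$, $F_k=F_{k-1}+F_{k-2}$) and $(c)_2\in\{0,1\}$ is the remainder of $c$ modulo $2$. Consequently, for every $c\geq2$, $$\rho_{2,(1,2,c)}=\frac{2^c}{3\cdot2^{c+1}-2F_{c+4}-2(c)_2}.$$
   Context: Let $X$ be a finite alphabet with $n\geq 2$ letters and $X^*$ the set of words over $X$; $|v|$ is the length of a word $v$. A code over $X$ is a finite sequence $C=(v_1,\ldots,v_m)$ of words over $X$ such that every $w\in X^*$ has at most one factorization into code-words: if $w=v_{i_1}\cdots v_{i_l}=v_{j_1}\cdots v_{j_{l'}}$ with $l,l'\geq1$, then $l=l'$ and $i_t=j_t$ for all $t$. (Codes are sequences, not sets.) A code $C=(v_1,\ldots,v_m)$ is a prefix code if for all $i,j$, $v_i$ is a prefix of $v_j$ if and only if $i=j$. For a finite sequence $L=(a_1,\ldots,a_m)$ of positive integers, $UD_n(L)$ is the set of all codes $(v_1,\ldots,v_m)$ over an $n$-letter alphabet with $|v_i|=a_i$ for all $i$, $PR_n(L)\subseteq UD_n(L)$ is the subset of prefix codes, and $\rho_{n,L}=|PR_n(L)|/|UD_n(L)|$. *)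

From mathcomp Require Import all_boot all_order all_algebra.
From mathcomp Require Import boolp.
Set Implicit Arguments. Unset Strict Implicit. Unset Printing Implicit Defensive.
Import GRing.Theory Num.Theory.

Definition is_code (n : nat) (C : seq (seq 'I_n)) : Prop :=
  forall s1 s2 : seq 'I_(size C),
    0 < size s1 -> 0 < size s2 ->
    flatten [seq nth [::] C (val i) | i <- s1] =
    flatten [seq nth [::] C (val i) | i <- s2] ->
    s1 = s2.

Definition is_prefix_code (n : nat) (C : seq (seq 'I_n)) : Prop :=
  forall i j : 'I_(size C),
    prefix (nth [::] C i) (nth [::] C j) <-> i = j.

Definition cand (n : nat) (L : seq nat) : finType :=
  {dffun forall i : 'I_(size L), (nth 0 L i).-tuple 'I_n}.

Definition code_seq (n : nat) (L : seq nat) (C : cand n L) : seq (seq 'I_n) :=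
  [seq val (C i) | i <- enum 'I_(size L)].

Definition UD_card (n : nat) (L : seq nat) : nat :=
  #|[set C : cand n L | `[< is_code (code_seq C) >] ]|.

Definition PR_card (n : nat) (L : seq nat) : nat :=
  #|[set C : cand n L | `[< is_prefix_code (code_seq C) >] ]|.

Definition rho (n : nat) (L : seq nat) : rat :=
  ((PR_card n L)%:R / (UD_card n L)%:R)%R.

Fixpoint fib (k : nat) : nat :=
  match k with
  | 0 => 0
  | 1 => 1
  | (k'.+1 as k1).+1 => fib k1 + fib k'
  end.

From mathcomp Require Import all_boot all_order all_algebra.
From mathcomp Require Import boolp zify ring.
Import GRing.Theory Num.Theory.
Set Implicit Arguments. Unset Strict Implicit. Unset Printing Implicit Defensive.

(* Over the letters a, b, a triple of lengths (1, 2, c) is ([a], v, w) with v one of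
   aa, ab, ba, bb.  Write v = b y when v starts with b and factor words greedily over
   [a] and [b; y]; the greedy parse leaves a residue, and w is "stuck" when parsing
   halts on b z with z <> y.
   - aa is never a code.
   - For v = ba the triple is a code iff w is stuck: the parsed length then synchronises
     two factorisations at the first occurrence of w; otherwise w or w a factorises over
     {a, ba}.  Non-stuck words of length c are counted by F_{c+2}.
   - ab is the mirror image of ba.
   - For v = bb the triple is a code iff w does not factorise over {a, bb} and w <> b^c;
     there are F_{c+1} factorisable words, and b^c is one of them iff c is even.
   Summing over a gives 2 (2 (2^c - F_{c+2}) + 2^c - F_{c+1} - (c)_2).  The triple is a
   prefix code iff v and w do not start with a and w does not start with v, which leaves
   2^c prefix codes when c >= 2. *)

Local Notation ord_mid := (@Ordinal 3 1 isT).

Section Factorizations.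
Variable n : nat.
Implicit Types (C : seq (seq 'I_n)) (u v w : seq 'I_n).

Definition flat C (s : seq 'I_(size C)) : seq 'I_n :=
  flatten [seq nth [::] C (val i) | i <- s].
Arguments flat : clear implicits.

Lemma flat_cons C (i : 'I_(size C)) s : flat C (i :: s) = nth [::] C i ++ flat C s.
Proof. by []. Qed.

Lemma flat_cat C (s t : seq 'I_(size C)) : flat C (s ++ t) = flat C s ++ flat C t.
Proof. by rewrite /flat map_cat flatten_cat. Qed.

Lemma flat_nil C s : (forall i : 'I_(size C), nth [::] C i != [::]) ->
  flat C s = [::] -> s = [::].
Proof. by case: s => [//|i s] /(_ i); rewrite flat_cons; case: (nth _ _ _). Qed.

Lemma is_code_flat C : is_code C -> forall s1 s2 : seq 'I_(size C),
  0 < size s1 -> 0 < size s2 -> flat C s1 = flat C s2 -> s1 = s2.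
Proof. by []. Qed.

Lemma is_code_heads C : (forall i : 'I_(size C), nth [::] C i != [::]) ->
  (forall (i j : 'I_(size C)) s1 s2, i != j -> flat C (i :: s1) <> flat C (j :: s2)) ->
  is_code C.
Proof.
move=> nzC heads; elim=> [//|i s1 IH] [//|j s2] _ _.
change (flat C (i :: s1) = flat C (j :: s2) -> i :: s1 = j :: s2) => e.
have [eij|/heads/(_ e)//] := eqVneq i j.
move: e; rewrite {}eij !flat_cons => /eqP; rewrite eqseq_cat // => /andP[_ /eqP e].
case: s1 s2 IH e => [|ord_mid s1] [|j2 s2] IH e //; last by rewrite (IH (j2 :: s2)).
- by have := flat_nil nzC (esym e).
- by have := flat_nil nzC e.
Qed.

Lemma flat_rev3 u v w (s : seq 'I_3) :
  flat [:: rev u; rev v; rev w] (rev s) = rev (flat [:: u; v; w] s).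
Proof.
rewrite /flat rev_flatten map_rev -map_comp; congr (flatten (rev _)).
by apply: eq_map => -[[|[|[|]]] ?].
Qed.

Lemma is_code_rev3 u v w : is_code [:: rev u; rev v; rev w] <-> is_code [:: u; v; w].
Proof.
suff revP u' v' w' : is_code [:: rev u'; rev v'; rev w'] -> is_code [:: u'; v'; w'].
  by split=> [|code]; [apply: revP | apply: revP; rewrite !revK].
move=> code s1 s2 s1P s2P /(congr1 rev); rewrite -!flat_rev3.
by move/code; rewrite !size_rev => /(_ s1P s2P) /(congr1 rev); rewrite !revK.
Qed.

End Factorizations.
Arguments flat {n} C s.
Arguments is_code_flat {n C} code s1 s2.

Lemma split_first (T : eqType) (x : T) s :
  x \in s -> exists s1 s2, x \notin s1 /\ s = s1 ++ x :: s2.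
Proof.
elim: s => // z s IH; have [<- _|xz] := eqVneq x z; first by exists [::], s.
rewrite in_cons (negbTE xz) => /IH[s1 [s2 [xs1 ->]]].
by exists (z :: s1), s2; rewrite in_cons negb_or xz.
Qed.

Lemma neq_letter (a b x : 'I_2) : b != a -> x != a -> x = b.
Proof. by case: a b x => -[|[]] // ? [[|[]] // ?] [[|[]] // ?] _ _; apply: val_inj. Qed.

Lemma other_letter (x : 'I_2) : {y : 'I_2 | y != x}.
Proof.
exists (if x == ord0 then ord_max else ord0).
by case: (eqVneq x ord0) => [->|]; rewrite // eq_sym.
Qed.

Section GreedyFactorization.
Variables (a b y : 'I_2).
Hypothesis ba : b != a.

(* What greedy factorisation over [:: a] and [:: b; y] leaves of [s]; a letter other
   than [a] is [b]. *)
Fixpoint residue (s : seq 'I_2) : seq 'I_2 :=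
  if s is x :: t then
    if x == a then residue t
    else if t is z :: t' then (if z == y then residue t' else s) else s
  else [::].

Definition stuck s := 1 < size (residue s).

Lemma residueA t : residue (a :: t) = residue t.
Proof. by rewrite /= eqxx. Qed.

Lemma residueB : residue [:: b] = [:: b].
Proof. by rewrite /= (negbTE ba). Qed.

Lemma residueBY t : residue [:: b, y & t] = residue t.
Proof. by rewrite /= (negbTE ba) eqxx. Qed.

Lemma residueBZ z t : z != y -> residue [:: b, z & t] = [:: b, z & t].
Proof. by move=> zy; rewrite /= (negbTE ba) (negbTE zy). Qed.

Lemma greedy_ind (P : seq 'I_2 -> Prop) :
  P [::] -> (forall t, P t -> P (a :: t)) -> P [:: b] ->
  (forall t, P t -> P [:: b, y & t]) -> (forall z t, z != y -> P [:: b, z & t]) ->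
  forall s, P s.
Proof.
move=> P0 Pa Pb Pby Pbz s; elim: {s}(size s).+1 {-2}s (ltnSn (size s)) => // m IH.
case=> [//|x t] /= lt; have [->|/(neq_letter ba) ->] := eqVneq x a.
  exact/Pa/IH.
case: t lt => [//|z t] /= lt; have [->|zy] := eqVneq z y; last exact: Pbz.
by apply/Pby/IH; lia.
Qed.

Lemma stuckA t : stuck (a :: t) = stuck t.
Proof. by rewrite /stuck residueA. Qed.

Lemma stuckBY t : stuck [:: b, y & t] = stuck t.
Proof. by rewrite /stuck residueBY. Qed.

Lemma residue_cat_stuck s r : stuck s -> residue (s ++ r) = residue s ++ r.
Proof.
elim/greedy_ind: s => [//|t IH||t IH|z t zy].
- by rewrite stuckA cat_cons !residueA.
- by rewrite /stuck residueB.
- by rewrite stuckBY !cat_cons !residueBY.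
- by rewrite !cat_cons !residueBZ.
Qed.

Lemma residue_suffix s : exists2 p, residue p = [::] & s = p ++ residue s.
Proof.
elim/greedy_ind: s => [|t [p pP tE]||t [p pP tE]|z t zy].
- by exists [::].
- by exists (a :: p); rewrite residueA // {1}tE.
- by exists [::]; rewrite ?residueB.
- by exists [:: b, y & p]; rewrite residueBY // {1}tE.
- by exists [::]; rewrite ?residueBZ.
Qed.

Lemma residue_unstuck s : ~~ stuck s -> residue s = [::] \/ residue s = [:: b].
Proof.
elim/greedy_ind: s => [|t IH||t IH|z t zy]; first by left.
- by rewrite stuckA residueA.
- by rewrite residueB; right.
- by rewrite stuckBY residueBY.
- by rewrite /stuck residueBZ.
Qed.

Definition trio (w : seq 'I_2) := [:: [:: a]; [:: b; y]; w].


Lemma residue_flat w t s :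
  ord_max \notin t -> residue (flat (trio w) t ++ s) = residue s.
Proof.
elim: t => // i t IH; rewrite in_cons negb_or => /andP[iM /IH{}IH].
rewrite flat_cons -catA; case: i iM => -[|[|[|//]]] ? iM; rewrite [_ ++ _]/=.
- by rewrite residueA.
- by rewrite residueBY.
- by rewrite -val_eqE in iM.
Qed.

Lemma residue_flat_nil w t : ord_max \notin t -> residue (flat (trio w) t) = [::].
Proof. by move=> tM; rewrite -[flat _ _]cats0 residue_flat. Qed.

Lemma residue_nil_flat w s :
  residue s = [::] -> exists2 t, ord_max \notin t & flat (trio w) t = s.
Proof.
elim/greedy_ind: s => [|t IH||t IH|z t zy]; first by exists [::].
- by rewrite residueA => /IH[u uM <-]; exists (ord0 :: u).
- by rewrite residueB.
- by rewrite residueBY => /IH[u uM <-]; exists (ord_mid :: u).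
- by rewrite residueBZ.
Qed.

Lemma trio_neq_nil w : w != [::] -> forall i : 'I_3, nth [::] (trio w) i != [::].
Proof. by move=> w0 -[[|[|[|]]] ?]. Qed.

Lemma stuck_code w : stuck w -> is_code (trio w).
Proof.
move=> wS; have w0 : w != [::] by case: (w) wS.
(* Residues pass through code-words before the first [w] and freeze at a stuck [w], so
   comparing lengths leaves nothing for the code-words in front of that [w]. *)
have headM (j : 'I_3) s1 s2 :
    j != ord_max -> w ++ flat (trio w) s1 <> flat (trio w) (j :: s2).
  move=> jM e; have := residue_cat_stuck (flat (trio w) s1) wS.
  rewrite e; have [/split_first[t [r [tM tE]]]|sM] := boolP (ord_max \in j :: s2); last first.
    by rewrite residue_flat_nil // => /(congr1 size); move: wS; rewrite size_cat /stuck /=; lia.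
  have t0 : t != [::] by case: t tE {tM} => // -[jE _]; rewrite jE eqxx in jM.
  rewrite tE flat_cat flat_cons residue_flat // residue_cat_stuck // => /(congr1 size).
  move/(congr1 size): e; rewrite tE flat_cat flat_cons !size_cat.
  change (nth [::] (trio w) ord_max) with w.
  move=> sizeE sizeR; suff /(@flat_nil _ (trio w) t (trio_neq_nil w0)) : flat (trio w) t = [::].
    by move/eqP: t0.
  by apply/nilP; rewrite /nilp; lia.
apply: is_code_heads => [|i j s1 s2]; first exact: trio_neq_nil.
have [->|iM] := eqVneq i ord_max; first by rewrite eq_sym; apply: headM.
have [->|jM] := eqVneq j ord_max; first by move=> _ /esym; apply: headM.
case: i j iM jM => -[|[|[|//]]] ? [[|[|[|//]]] ?] //= _ _ _ [] /eqP.
- by rewrite eq_sym (negbTE ba).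
- by rewrite (negbTE ba).
Qed.

Lemma residue_nil_noncode w : w != [::] -> residue w = [::] -> ~ is_code (trio w).
Proof.
move=> w0 /(residue_nil_flat w)[t tM tE] /is_code_flat code.
have t0 : 0 < size t by case: t tE {tM} => //= tE; rewrite -tE in w0.
have := code [:: ord_max] t isT t0; rewrite tE flat_cons cats0 => /(_ erefl) tE'.
by rewrite -tE' in_cons eqxx in tM.
Qed.

End GreedyFactorization.

Lemma code_trio_alternating (a b : 'I_2) w : b != a -> w != [::] ->
  is_code (trio a b a w) <-> stuck a a w.
Proof.
move=> ba w0; split=> [/is_code_flat code|]; last exact: stuck_code.
apply/negPn/negP => /(residue_unstuck ba)[/(residue_nil_noncode ba w0)//|wR].
have [p /(residue_nil_flat ba w)[t tM tE]] := residue_suffix a ba w.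
rewrite wR => wE.
have := code [:: ord_max; ord0] (rcons t ord_mid) isT; rewrite size_rcons => /(_ isT).
rewrite -cats1 flat_cat tE !flat_cons /= wE -catA => /(_ erefl).
by move/(congr1 (val \o last ord0)); rewrite /= last_cat.
Qed.

Section DoubledLetter.
Variables (a b : 'I_2).
Hypothesis ba : b != a.

Lemma residue_nseq n : (residue a b (nseq n b) == [::]) = ~~ odd n.
Proof.
elim/ltn_ind: n => -[|[|n]] IH //; first by rewrite (residueB b ba).
by rewrite -[nseq _ _]/[:: b, b & nseq n b] (residueBY b ba) IH //= negbK.
Qed.

Lemma residue_rev q : residue a b q = [::] -> residue a b (rev q) = [::].
Proof.
move=> /(residue_nil_flat ba [::])[t tM <-].
rewrite -(flat_rev3 [:: a] [:: b; b] [::] t).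
by apply: residue_flat_nil; rewrite // mem_rev.
Qed.

Lemma stuck_cons q : residue a b q = [::] -> q != nseq (size q) b -> stuck a b (b :: q).
Proof.
elim/(@greedy_ind a b b ba): q => [//|t _ _ _||t IH|z t zb].
- by rewrite /stuck (residueBZ ba) // eq_sym.
- by rewrite (residueB b ba).
- rewrite (stuckBY b ba) (residueBY b ba) => /IH{}IH tb; apply: IH.
  by apply: contra tb => /eqP {1}->.
- by rewrite (residueBZ ba).
Qed.

Lemma flat_nseq w k : flat (trio a b b w) (nseq k ord_mid) = nseq (k + k) b.
Proof. by elim: k => //= k IH; rewrite flat_cons IH addnS. Qed.

Lemma code_trio_double w : w != [::] ->
  is_code (trio a b b w) <-> (residue a b w != [::]) && (w != nseq (size w) b).
Proof.
move=> w0; split=> [code|/andP[wR wb]].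
  apply/andP; split; apply/eqP => wE; first exact: (residue_nil_noncode (y := b) ba w0 wE code).
  have := is_code_flat code [:: ord_max; ord_max] (nseq (size w) ord_mid) isT.
  rewrite size_nseq lt0n size_eq0 w0 flat_nseq !flat_cons /= => /(_ isT).
  rewrite -[flat _ [::]]/[::] cats0 {1 2}wE -nseqD => /(_ erefl) /(congr1 (val \o head ord0)).
  by case: (size w) w0 wE => [|k] //= _ ->.
have [|/(residue_unstuck ba)[/eqP|wB]] := boolP (stuck a b w); first exact: stuck_code.
  by rewrite (negbTE wR).
(* Here [w = p ++ [:: b]] with [p] factorisable, and the mirror word [b :: rev p] is
   stuck unless [w] is a power of [b]. *)
have [p pR pE] := residue_suffix b ba w; rewrite wB in pE.
apply/is_code_rev3; apply: (stuck_code ba); rewrite pE rev_cat /=.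
apply: stuck_cons; first exact: residue_rev.
apply: contra wb; rewrite size_rev => /eqP pb.
by rewrite pE size_cat -[p]revK pb rev_nseq size_nseq nseqD.
Qed.

End DoubledLetter.

Fixpoint words n : seq (seq 'I_2) :=
  if n is m.+1 then [seq x :: s | x <- enum 'I_2, s <- words m] else [:: [::]].

Lemma mem_words n s : (s \in words n) = (size s == n).
Proof.
elim: n s => [|n IH] [|x s] //=.
  by apply/allpairsP => -[[y t] []].
apply/allpairsP/idP => [[[y t] [_ /= + [_ ->]]]|sn]; first by rewrite IH.
by exists (x, s); rewrite mem_enum IH.
Qed.

Lemma uniq_words n : uniq (words n).
Proof.
elim: n => //= n IH; apply: allpairs_uniq => //; first exact: enum_uniq.
by move=> [? ?] [? ?] _ _ [-> ->].
Qed.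

Lemma size_words n : size (words n) = 2 ^ n.
Proof. by elim: n => //= n IH; rewrite size_allpairs size_enum_ord IH expnS. Qed.

Lemma count_allpairs (S T R : Type) (f : S -> T -> R) (P : pred R) s t :
  count P [seq f x y | x <- s, y <- t] = sumn [seq count (P \o f x) t | x <- s].
Proof. by elim: s => //= x s IH; rewrite count_cat count_map IH. Qed.

Lemma perm_enum_letters (a b : 'I_2) : b != a -> perm_eq (enum 'I_2) [:: a; b].
Proof.
move=> ba; apply: uniq_perm; rewrite ?enum_uniq //= ?inE 1?eq_sym ?ba // => x.
by rewrite mem_enum !inE; have [|/(neq_letter ba) ->] := eqVneq x a; rewrite ?eqxx ?orbT.
Qed.

Lemma sumn_words_cons (a b : 'I_2) (F : seq 'I_2 -> nat) n : b != a ->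
  sumn (map F (words n.+1)) =
  sumn [seq F (a :: s) | s <- words n] + sumn [seq F (b :: s) | s <- words n].
Proof.
move=> ba; have := perm_allpairs cons (perm_enum_letters ba) (perm_refl (words n)).
by rewrite /= cats0 => /(perm_map F)/perm_sumn ->; rewrite map_cat sumn_cat -!map_comp.
Qed.

Lemma sumn_words1 (a b : 'I_2) (F : seq 'I_2 -> nat) : b != a ->
  sumn (map F (words 1)) = F [:: a] + F [:: b].
Proof. by move=> ba; rewrite (sumn_words_cons _ 0 ba) /= !addn0. Qed.

Lemma count_words_cons (a b : 'I_2) (P : pred (seq 'I_2)) n : b != a ->
  count P (words n.+1) =
  count (P \o cons a) (words n) + count (P \o cons b) (words n).
Proof. by move=> ba; rewrite -!sumn_count (sumn_words_cons _ _ ba). Qed.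

Lemma count_rev_words (P : pred (seq 'I_2)) n :
  count (P \o rev) (words n) = count P (words n).
Proof.
have rev_inj : injective (@rev 'I_2) := inv_inj revK.
rewrite -count_map; apply/permP/uniq_perm.
- by rewrite map_inj_uniq ?uniq_words.
- exact: uniq_words.
- by move=> s; rewrite -{1}[s]revK (mem_map rev_inj) !mem_words size_rev.
Qed.

Lemma fib_rec_eq (f : nat -> nat) k : f 0 = fib k -> f 1 = fib k.+1 ->
  (forall n, f n.+2 = f n.+1 + f n) -> forall n, f n = fib (n + k).
Proof.
move=> f0 f1 fS; elim/ltn_ind => -[|[|n]] IH //.
by rewrite fS !IH // !addSn.
Qed.

Section ResidueCount.
Variables (a b y : 'I_2).
Hypothesis ba : b != a.

Lemma count_residue_rec (p : pred (seq 'I_2)) n :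
  (forall z t, z != y -> ~~ p [:: b, z & t]) ->
  count (p \o residue a y) (words n.+2) =
  count (p \o residue a y) (words n.+1) + count (p \o residue a y) (words n).
Proof.
move=> pBZ; have [z zy] := other_letter y.
rewrite (count_words_cons _ _ ba); congr (_ + _).
  by apply: eq_count => t; rewrite /= eqxx.
rewrite (count_words_cons _ _ zy) -[RHS]addn0; congr (_ + _).
  by apply: eq_count => t; rewrite /= (negbTE ba) eqxx.
rewrite (@eq_count _ _ pred0) ?count_pred0 // => t.
by rewrite /= (negbTE ba) (negbTE zy) (negbTE (pBZ _ _ zy)).
Qed.

Lemma count_residue_nil n : count (fun s => residue a y s == [::]) (words n) = fib n.+1.
Proof.
rewrite -[n.+1]addn1; apply: (fib_rec_eq (f := fun n => count _ (words n))) => //.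
- by rewrite (count_words_cons _ _ ba) /= eqxx (negbTE ba).
- by move=> m; exact: (count_residue_rec (p := pred1 [::])).
Qed.

Lemma count_unstuck n : count (fun s => ~~ stuck a y s) (words n) = fib n.+2.
Proof.
rewrite -[n.+2]addn2; apply: (fib_rec_eq (f := fun n => count _ (words n))) => //.
- by rewrite (count_words_cons _ _ ba) /= /stuck /= eqxx (negbTE ba).
- by move=> m; exact: (count_residue_rec (p := fun r => ~~ (1 < size r))).
Qed.

End ResidueCount.

Lemma code_trio_reversed (a b : 'I_2) w : b != a -> w != [::] ->
  is_code [:: [:: a]; [:: a; b]; w] <-> stuck a a (rev w).
Proof.
move=> ba w0; rewrite -is_code_rev3; apply: code_trio_alternating => //.
by rewrite -size_eq0 size_rev size_eq0.
Qed.

Lemma noncode_repeated (a : 'I_2) w : ~ is_code [:: [:: a]; [:: a; a]; w].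
Proof. by move=> /is_code_flat/(_ [:: ord_mid] [:: ord0; ord0] isT isT erefl). Qed.

Section CodeCount.
Variables (a b : 'I_2) (c : nat).
Hypotheses (ba : b != a) (c0 : 0 < c).

Let nonempty w : w \in words c -> w != [::].
Proof. by rewrite mem_words -size_eq0 => /eqP ->; rewrite -lt0n. Qed.

Lemma count_code_alternating :
  count (fun w => `[< is_code [:: [:: a]; [:: b; a]; w] >]) (words c) + fib c.+2 = 2 ^ c.
Proof.
rewrite -(count_unstuck a ba) -size_words -(count_predC (stuck a a)); congr (_ + _).
apply: eq_in_count => w /nonempty w0.
exact: (asbool_equiv_eqP idP (code_trio_alternating ba w0)).
Qed.

Lemma count_code_reversed :
  count (fun w => `[< is_code [:: [:: a]; [:: a; b]; w] >]) (words c) + fib c.+2 = 2 ^ c.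
Proof.
rewrite -(count_unstuck a ba) -size_words -(count_predC (stuck a a)) -(count_rev_words (stuck a a)).
congr (_ + _); apply: eq_in_count => w /nonempty w0.
exact: (asbool_equiv_eqP idP (code_trio_reversed ba w0)).
Qed.

Lemma count_code_double :
  count (fun w => `[< is_code [:: [:: a]; [:: b; b]; w] >]) (words c) +
  (fib c.+1 + odd c) = 2 ^ c.
Proof.
pose p w := residue a b w == [::]; pose q w := w == nseq c b.
rewrite addnC -size_words -(count_predC (predU p q)); congr (_ + _); last first.
  apply: eq_in_count => w wc; have w0 := nonempty wc; move: wc; rewrite mem_words => /eqP wc.
  by rewrite (asbool_equiv_eqP idP (code_trio_double ba w0)) /= negb_or wc.
apply/eqP; rewrite -(eqn_add2r (count (predI p q) (words c))) count_predUI.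
have -> : count q (words c) = 1.
  by rewrite (count_uniq_mem _ (uniq_words c)) mem_words size_nseq eqxx.
have -> : count (predI p q) (words c) = ~~ odd c.
  rewrite (@eq_count _ _ (fun w => p (nseq c b) && q w)) => [|w]; last first.
    by rewrite /= /q; case: eqP => [->|]; rewrite ?andbF ?andbT.
  rewrite /p (residue_nseq ba); case: (odd c) => /=; first exact: count_pred0.
  by rewrite (count_uniq_mem _ (uniq_words c)) mem_words size_nseq eqxx.
by rewrite (count_residue_nil b ba); case: (odd c); rewrite ?addn0 ?addn1.
Qed.

Lemma count_code_block :
  sumn [seq count (fun w => `[< is_code [:: [:: a]; v; w] >]) (words c) | v <- words 2]
  + 2 * fib c.+2 + fib c.+1 + odd c = 3 * 2 ^ c.
Proof.
rewrite (sumn_words_cons _ 1 ba) !(sumn_words1 _ ba).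
rewrite (@eq_count _ _ pred0) ?count_pred0 => [|w]; last exact/asboolPn/noncode_repeated.
have := count_code_alternating; have := count_code_reversed; have := count_code_double.
lia.
Qed.

End CodeCount.

Section Candidates.
Variable c : nat.
Local Notation L := [:: 1; 2; c].

Definition triples : seq (seq (seq 'I_2)) :=
  [seq u :: vw | u <- words 1, vw <- [seq [:: v; w] | v <- words 2, w <- words c]].

Lemma count_triples (P : pred (seq (seq 'I_2))) : count P triples =
  sumn [seq sumn [seq count (fun w => P [:: u; v; w]) (words c) | v <- words 2] | u <- words 1].
Proof. by rewrite count_allpairs; congr sumn; apply: eq_map => u; rewrite count_allpairs. Qed.

Lemma uniq_triples : uniq triples.
Proof.
apply: allpairs_uniq; rewrite ?uniq_words //; last by move=> [? ?] [? ?] _ _ [-> ->].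
by apply: allpairs_uniq; rewrite ?uniq_words // => -[? ?] [? ?] _ _ [-> ->].
Qed.

Lemma code_seqE (C : cand 2 L) :
  code_seq C = [:: val (C ord0); val (C (ord_mid)); val (C ord_max)].
Proof.
rewrite /code_seq !enum_ordSl enum_ord0 /=.
by congr [:: val (C _); val (C _); val (C _)]; apply: val_inj.
Qed.

Lemma code_seq_inj : injective (@code_seq 2 L).
Proof.
move=> C D /(congr1 (nth [::] ^~ _)) CD; apply/ffunP => i; apply: val_inj.
by have := CD i; rewrite /code_seq !(nth_map i) -?enumT ?size_enum_ord ?nth_ord_enum.
Qed.

Lemma card_cand : #|cand 2 L| = size triples.
Proof.
rewrite card_dep_ffun /image_mem /= !enum_ordSl enum_ord0 /= !card_tuple card_ord.
by rewrite !size_allpairs size_enum_ord size_words /= !expnS expn0; lia.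
Qed.

Lemma card_code_seq (P : pred (seq (seq 'I_2))) :
  #|[set C : cand 2 L | P (code_seq C)]| = count P triples.
Proof.
rewrite cardsE cardE /enum_mem size_filter -enumT.
rewrite -[LHS]/(count (P \o @code_seq 2 L) (enum (cand 2 L))) -count_map.
have uniq_codes : uniq (map (@code_seq 2 L) (enum (cand 2 L))).
  by rewrite (map_inj_uniq code_seq_inj) enum_uniq.
apply/permP/uniq_perm; rewrite ?uniq_triples //.
apply: (uniq_min_size uniq_codes _ _).2; last by rewrite size_map -cardE card_cand.
move=> _ /mapP[C _ ->]; rewrite code_seqE.
apply: allpairs_f; rewrite ?mem_words ?size_tuple //.
by apply: allpairs_f; rewrite mem_words size_tuple.
Qed.

End Candidates.

Lemma prefix_trio (u0 v0 v1 w0 w1 : 'I_2) w :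
  is_prefix_code [:: [:: u0]; [:: v0; v1]; [:: w0, w1 & w]] <->
  [&& v0 != u0, w0 != u0 & (v0, v1) != (w0, w1)].
Proof.
set C := [:: _; _; _]; split=> [pc|/and3P[vu wu vw] i j].
  have noprefix (i j : 'I_3) : i != j -> ~~ prefix (nth [::] C i) (nth [::] C j).
    by move=> ij; apply/negP => /(pc i j) eij; rewrite eij eqxx in ij.
  have := noprefix ord0 ord_mid isT; have := noprefix ord0 ord_max isT.
  have := noprefix ord_mid ord_max isT; rewrite /= !prefix0s !andbT xpair_eqE.
  by rewrite ![u0 == _]eq_sym => -> -> ->.
split=> [|->]; last exact: prefix_refl.
move: vu wu vw; rewrite xpair_eqE.
case: i j => -[|[|[|//]]] ? [[|[|[|//]]] ?] //=; rewrite ?prefix0s ?andbT ?andbF;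
  try by move=> *; apply: val_inj.
- by move=> /negbTE vu _ _; rewrite eq_sym vu.
- by move=> _ /negbTE wu _; rewrite eq_sym wu.
- by move=> _ _ /negbTE ->.
- by move=> _ _ + /and3P[/eqP wv0 /eqP wv1 _]; rewrite wv0 wv1 !eqxx.
Qed.

Lemma count_prefix_trio (u0 v0 v1 : 'I_2) n :
  count (fun w => `[< is_prefix_code [:: [:: u0]; [:: v0; v1]; w] >]) (words n.+2) =
  (v0 != u0) * 2 ^ n.
Proof.
have [b bu] := other_letter u0.
pose f x y := [&& v0 != u0, x != u0 & (v0, v1) != (x, y)].
have countE x y : count (fun w =>
    `[< is_prefix_code [:: [:: u0]; [:: v0; v1]; [:: x, y & w]] >]) (words n) = f x y * 2 ^ n.
  rewrite (@eq_count _ _ (fun => f x y)) => [|w]; last first.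
    exact: (asbool_equiv_eqP idP (prefix_trio _ _ _ _ _ _)).
  by case: (f x y); [rewrite mul1n -size_words; exact: count_predT | exact: count_pred0].
rewrite !(count_words_cons _ _ bu) !countE /f eqxx /= !andbF /=.
have [->|/(neq_letter bu) ->] := eqVneq v0 u0; rewrite ?eqxx //= bu !xpair_eqE eqxx /=.
by have [->|/(neq_letter bu) ->] := eqVneq v1 u0; rewrite ?eqxx ?bu ?(eq_sym u0 b) ?bu; lia.
Qed.

Lemma count_prefix_block (a b : 'I_2) n : b != a ->
  sumn [seq count (fun w => `[< is_prefix_code [:: [:: a]; v; w] >]) (words n.+2) | v <- words 2]
  = 2 ^ n.+1.
Proof.
move=> ba; rewrite (sumn_words_cons _ 1 ba) !(sumn_words1 _ ba) !count_prefix_trio eqxx ba.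
by rewrite expnS; lia.
Qed.

Lemma UD_card_formula c : 0 < c ->
  UD_card 2 [:: 1; 2; c] + 2 * fib (c + 4) + 2 * (c %% 2) = 3 * 2 ^ c.+1.
Proof.
move=> c0; rewrite /UD_card (card_code_seq c (fun C => `[< is_code C >])) count_triples.
rewrite (sumn_words1 _ (isT : ord_max != ord0 :> 'I_2)).
have fibSS n : fib n.+2 = fib n.+1 + fib n by [].
rewrite addn4 fibSS [fib c.+3]fibSS modn2 expnS.
have := count_code_block (isT : ord_max != ord0 :> 'I_2) c0.
have := count_code_block (isT : ord0 != ord_max :> 'I_2) c0.
lia.
Qed.

Lemma PR_card_formula c : 1 < c -> PR_card 2 [:: 1; 2; c] = 2 ^ c.
Proof.
case: c => [|[|n]] // _.
rewrite /PR_card (card_code_seq _ (fun C => `[< is_prefix_code C >])) count_triples.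
rewrite (sumn_words1 _ (isT : ord_max != ord0 :> 'I_2)).
rewrite (count_prefix_block n (isT : ord_max != ord0 :> 'I_2)).
rewrite (count_prefix_block n (isT : ord0 != ord_max :> 'I_2)).
by rewrite addnn -mul2n -expnS.
Qed.

Theorem mainTheorem13 :
  (forall c : nat, 1 <= c ->
     (Posz (UD_card 2 [:: 1%N; 2%N; c]) =
     ((3 * 2 ^ c.+1)%:Z - 2 * (fib (c + 4))%:Z - 2 * (c %% 2)%:Z)%R)) /\
  (forall c : nat, 2 <= c ->
     rho 2 [:: 1%N; 2%N; c] =
     ((2 ^ c)%:R / ((3 * 2 ^ c.+1)%:R - 2 * (fib (c + 4))%:R - 2 * (c %% 2)%:R))%R).
Proof.
split=> c c_ge; first by have := UD_card_formula c_ge; lia.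
rewrite /rho (PR_card_formula c_ge); congr (_ / _)%R.
have /(congr1 (fun n => n%:R : rat)) <- := UD_card_formula (ltnW c_ge).
by rewrite !natrD; ring.
Qed.
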